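(* Let $K\ge1$, $p_D\in(0,1]$, $p^+\in(0,1)$, and let $\varphi^\pm=(\varphi^\pm_y)_{y\in[K]}$ be fixed probability vectors with $\varphi^-_y>0$ for all $y$. For unknowns $(q_y,q_y^+)_y$ define \[ \Delta\mathrm{s.p.}(\hat y)=\frac{p_D}{p^+(1-p^+)}\Bigl(\varphi^+_{\hat y}(p^+-q^+)-(q_{\hat y}p^+-q^+_{\hat y})\Bigr)+(\varphi^+_{\hat y}-\varphi^-_{\hat y})\Bigl(1-p_D\frac{1-q^+}{1-p^+}\Bigr),\quad q^+=\sum_yq_y^+. \] If $p_D\ge(1-p^+)\max_y\frac{\varphi^-_y-\varphi^+_y}{\varphi^-_y}$, then there exist $(q_y,q_y^+)_y$ with $\sum_yq_y=1$ and $0\le q_y^+\le q_y$ for all $y$ such that $\Delta\mathrm{s.p.}(\hat y)=0$ for all $\hat y\in[K]$.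
   Context: Interpretation: $p_D=\mathbb{P}(D=1)$ is the memorized mass, $p^+=\mathbb{P}(A=1)$, $q_y=\mathbb{P}(Y=y\mid D=1)$, $q^+_y=\mathbb{P}(Y=y,A=1\mid D=1)$, $\varphi^\pm_y$ the prediction rates of the base classifier on the unmemorized part in group $A=1$ resp. $A=0$; the formula is the statistical parity gap of the memorizing classifier, with $\varphi^\pm$ treated as fixed parameters. *)

From mathcomp Require Import all_boot all_order all_algebra.
Set Implicit Arguments. Unset Strict Implicit. Unset Printing Implicit Defensive.
Import Order.TTheory GRing.Theory Num.Theory.
Local Open Scope ring_scope.

Definition prob_vec (R : realFieldType) (K : nat) (v : 'I_K -> R) : Prop :=
  (forall y, 0 <= v y) /\ \sum_(y < K) v y = 1.

Definition delta_sp (R : realFieldType) (K : nat) (pD pplus : R)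
  (phip phim q qp : 'I_K -> R) (yh : 'I_K) : R :=
  let qplus := \sum_(y < K) qp y in
  pD / (pplus * (1 - pplus)) * (phip yh * (pplus - qplus) - (q yh * pplus - qp yh))
  + (phip yh - phim yh) * (1 - pD * ((1 - qplus) / (1 - pplus))).

From mathcomp Require Import all_boot all_order all_algebra.
From mathcomp Require Import ring lra.
Set Implicit Arguments. Unset Strict Implicit. Unset Printing Implicit Defensive.
Import Order.TTheory GRing.Theory Num.Theory.
Local Open Scope ring_scope.

(* Put all memorized mass in group A = 0, i.e. q^+ = 0.  Then the parity gap
   at yh is affine in q yh alone, with the unique root
   q yh = phim yh - (1 - p^+) (phim yh - phip yh) / p_D.
   These roots sum to 1 because phip and phim are probability vectors, and
   they are nonnegative exactly when p_D satisfies the lower bound. *)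

Definition parity_root (R : fieldType) (K : nat) (pD pplus : R)
  (phip phim : 'I_K -> R) (y : 'I_K) : R :=
  phim y - (1 - pplus) * (phim y - phip y) / pD.

Lemma sum_parity_root (R : fieldType) (K : nat) (pD pplus : R)
  (phip phim : 'I_K -> R) :
  \sum_(y < K) phip y = 1 -> \sum_(y < K) phim y = 1 ->
  \sum_(y < K) parity_root pD pplus phip phim y = 1.
Proof.
move=> Sp Sm; rewrite big_split /= sumrN Sm.
under eq_bigr do rewrite -mulrA.
by rewrite -mulr_sumr -mulr_suml big_split /= sumrN Sm Sp subrr !(mul0r, mulr0) subr0.
Qed.

Lemma parity_root_ge0 (R : realFieldType) (K : nat) (pD pplus : R)
  (phip phim : 'I_K -> R) (y : 'I_K) :
  0 < pD -> 0 < phim y ->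
  (1 - pplus) * ((phim y - phip y) / phim y) <= pD ->
  0 <= parity_root pD pplus phip phim y.
Proof.
move=> pD_gt0 phim_gt0; rewrite mulrA ler_pdivrMr // => bound.
rewrite subr_ge0 ler_pdivrMr //; lra.
Qed.

Lemma delta_sp_parity_root (R : realFieldType) (K : nat) (pD pplus : R)
  (phip phim : 'I_K -> R) (yh : 'I_K) :
  pD != 0 -> pplus != 0 -> pplus != 1 ->
  delta_sp pD pplus phip phim (parity_root pD pplus phip phim) (fun=> 0) yh = 0.
Proof.
move=> pD_neq0 pplus_neq0 pplus_neq1.
have pplusC_neq0 : 1 - pplus != 0 by rewrite subr_eq0 eq_sym.
rewrite /delta_sp /parity_root big1 //.
by field; rewrite pD_neq0 pplus_neq0 pplusC_neq0.
Qed.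

Theorem corollary10 (R : realFieldType) (K : nat) (pD pplus : R)
  (phip phim : 'I_K -> R) :
  (1 <= K)%N ->
  0 < pD -> pD <= 1 ->
  0 < pplus -> pplus < 1 ->
  prob_vec phip -> prob_vec phim ->
  (forall y, 0 < phim y) ->
  (* p_D >= (1 - p^+) * max_y (phim y - phip y) / phim y *)
  (forall y, (1 - pplus) * ((phim y - phip y) / phim y) <= pD) ->
  exists q qp : 'I_K -> R,
    \sum_(y < K) q y = 1 /\
    (forall y, 0 <= qp y /\ qp y <= q y) /\
    (forall yh, delta_sp pD pplus phip phim q qp yh = 0).
Proof.
move=> _ pD_gt0 _ pplus_gt0 pplus_lt1 [_ Sp] [_ Sm] phim_gt0 pD_bound.
exists (parity_root pD pplus phip phim), (fun=> 0); split; last split.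
- exact: sum_parity_root.
- by move=> y; split; last exact: parity_root_ge0.
- move=> yh; apply: delta_sp_parity_root.
  + exact: lt0r_neq0.
  + exact: lt0r_neq0.
  + by rewrite lt_eqF.
Qed.
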